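(* Let $M\in\mathbb{T}^{n\times n}$ and $q\in\mathbb{T}^n$ be such that no column of $M$ is the all-$(-\infty)$ vector and no entry of $q$ equals $-\infty$, and let $G=(V,E)$ be the associated colored bipartite multigraph. If $F\subset E$ is a perfect matching of $G$ containing at least one red edge, then $\alpha(F)$ is a solution of the TNECP instance $(M,q)$. Moreover, if the instance is nondegenerate, every solution of the TNECP instance is of the form $\alpha(F)$ for such a perfect matching $F$.
   Context: $\mathbb{T}=\mathbb{R}\cup\{-\infty\}$, $\oplus=\max$, $\odot=+$; convention $a-(-\infty)=+\infty$. TNECP instance $(M,q)$: find $(w,z)\in\mathbb{T}^n\times\mathbb{T}^n$ with $w\oplus M\odot z=q$, $\max_i(w_i+z_i)=-\infty$, and $z$ not the all-$(-\infty)$ vector. It is nondegenerate if for each $j$ the minimum $\min_k(q_k-M_{kj})$ is attained by exactly one $k$. The graph $G$ has row nodes $u_1,\dots,u_n$, column nodes $v_1,\dots,v_n$, a blue edge $u_iv_i$ for every $i$, and a red edge $u_iv_j$ whenever $q_i-M_{ij}=\min_k(q_k-M_{kj})$. For $F\subset E$, $\alpha(F)=(w,z)$ with $w_i=q_i$ if the blue edge $u_iv_i\in F$ and $-\infty$ otherwise, and $z_j=q_i-M_{ij}$ if a red edge $u_iv_j\in F$ and $-\infty$ otherwise. *)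

From HB Require Import structures.
From mathcomp Require Import all_boot all_order all_algebra.
From mathcomp Require Import constructive_ereal.
Set Implicit Arguments. Unset Strict Implicit. Unset Printing Implicit Defensive.
Import Order.TTheory GRing.Theory Num.Theory.
Local Open Scope ring_scope.

Section Trop.
Variable R : realFieldType.

(* Tropical numbers T = R ∪ {-oo}: None stands for -oo. *)
Definition trop := option R.

Definition tmax (a b : trop) : trop :=
  match a, b with
  | None, _ => b
  | _, None => a
  | Some x, Some y => Some (Num.max x y)
  end.

Definition tmul (a b : trop) : trop :=
  match a, b with
  | Some x, Some y => Some (x + y)
  | _, _ => None
  end.

(* difference a - b with values in R ∪ {±oo}, with a - (-oo) = +oo *)
Definition tdiff (a b : trop) : \bar R :=
  match b with
  | None => +oo%E
  | Some y => match a with None => -oo%E | Some x => (x - y)%:E end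
  end.

(* difference as a tropical number (used for z_j, where the red edge
   guarantees both arguments are finite) *)
Definition tsub (a b : trop) : trop :=
  match a, b with
  | Some x, Some y => Some (x - y)
  | _, _ => None
  end.

Variable n : nat.
Variables (M : 'I_n -> 'I_n -> trop) (q : 'I_n -> trop).

Definition tmatvec (z : 'I_n -> trop) (i : 'I_n) : trop :=
  \big[tmax/None]_(j < n) tmul (M i j) (z j).

Definition is_solution (w z : 'I_n -> trop) : Prop :=
  (forall i, tmax (w i) (tmatvec z i) = q i) /\
  \big[tmax/None]_(i < n) tmul (w i) (z i) = None /\
  (exists j, z j <> None).

Definition colmin (j : 'I_n) : \bar R :=
  \big[Order.min/+oo%E]_(k < n) tdiff (q k) (M k j).

Definition tnecp_nondegenerate : Prop :=
  forall j : 'I_n, #|[set k : 'I_n | tdiff (q k) (M k j) == colmin j]| = 1%N.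

(* Edges of the multigraph G: inl i = blue edge u_i v_i,
   inr (i,j) = red edge u_i v_j (only present when is_edge holds). *)
Definition edge := ('I_n + 'I_n * 'I_n)%type.

Definition is_edge (e : edge) : bool :=
  match e with
  | inl _ => true
  | inr (i, j) => tdiff (q i) (M i j) == colmin j
  end.

Definition is_red (e : edge) : bool := if e is inr _ then true else false.

Definition row_of (e : edge) : 'I_n := match e with inl i => i | inr (i, _) => i end.
Definition col_of (e : edge) : 'I_n := match e with inl i => i | inr (_, j) => j end.

Definition perfect_matching (F : {set edge}) : Prop :=
  (forall e, e \in F -> is_edge e) /\
  (forall i : 'I_n, #|[set e in F | row_of e == i]| = 1%N) /\
  (forall j : 'I_n, #|[set e in F | col_of e == j]| = 1%N).

Definition alpha_w (F : {set edge}) (i : 'I_n) : trop :=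
  if inl i \in F then q i else None.

Definition alpha_z (F : {set edge}) (j : 'I_n) : trop :=
  match [pick i : 'I_n | inr (i, j) \in F] with
  | Some i => tsub (q i) (M i j)
  | None => None
  end.

End Trop.

From HB Require Import structures.
From mathcomp Require Import all_boot all_order all_algebra.
From mathcomp Require Import constructive_ereal.
Import Order.TTheory GRing.Theory Num.Theory.
Local Open Scope ring_scope.

(* The bound M ⊙ z <= q holds iff z_j <= min_k (q_k - M_kj) for every j,
   and red edges are exactly the pairs (i, j) where q_i - M_ij attains this
   minimum.  For a perfect matching F, alpha(F) meets the bound with equality
   on its red edges, so the edge of F at row i makes the i-th equation tight
   (through w_i = q_i or through M_ij + z_j = q_i), and complementarity holds
   because v_i is matched only once.  Conversely, for a solution every row i is
   tight through w_i = q_i or through some j with M_ij + z_j = q_i, and such a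
   pair is a red edge.  Choosing one such edge per row gives a map from rows to
   columns that is injective (by complementarity and nondegeneracy), hence
   bijective, so the chosen edges form a perfect matching F with
   alpha(F) = (w, z). *)

Section TropicalValues.
Variable R : realFieldType.

Definition ereal_of_trop (a : trop R) : \bar R :=
  if a is Some x then x%:E else -oo%E.

Lemma ereal_of_trop_inj : injective ereal_of_trop.
Proof. by case=> [x|] [y|] //= [->]. Qed.

Lemma ereal_of_trop_max :
  {morph ereal_of_trop : a b / tmax a b >-> Order.max a b}.
Proof.
case=> [x|] [y|] //=; rewrite ?EFin_max ?maxeNy //.
by rewrite maxC maxeNy.
Qed.

Lemma ereal_of_trop_bigmax (I : Type) (r : seq I) (P : pred I)
    (F : I -> trop R) :
  ereal_of_trop (\big[@tmax R/None]_(i <- r | P i) F i) =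
  \big[Order.max/-oo%E]_(i <- r | P i) ereal_of_trop (F i).
Proof. exact: (big_morph _ ereal_of_trop_max). Qed.

Lemma tmul_le_tdiff (m z a : trop R) :
  (ereal_of_trop (tmul m z) <= ereal_of_trop a)%E =
  (ereal_of_trop z <= tdiff a m)%E.
Proof.
case: m z a => [m|] [z|] [a|] /=; rewrite ?leNye ?leey ?lee_fin //.
by rewrite lerBrDr addrC.
Qed.

Lemma tmul_eq_SomeP (a : R) (m z : trop R) :
  tmul m z = Some a <-> exists2 b, m = Some b & z = Some (a - b).
Proof.
split=> [|[b -> ->] /=]; last by rewrite addrC subrK.
by case: m z => [b|] [c|] //= [<-]; exists b => //; rewrite addrC addKr.
Qed.

Lemma bigtmax_eq_None (I : finType) (F : I -> trop R) :
  \big[@tmax R/None]_i F i = None <-> forall i, F i = None.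
Proof.
split=> [F_None i|F_None]; last first.
  by elim/big_rec: _ => // i x _ ->; rewrite F_None.
apply: ereal_of_trop_inj; apply: le_anti; rewrite leNye andbT.
rewrite -[X in (_ <= X)%E]/(ereal_of_trop None) -F_None.
by rewrite ereal_of_trop_bigmax le_bigmax.
Qed.

End TropicalValues.

Arguments ereal_of_trop {R}.

Section TnecpInstance.
Variables (R : realFieldType) (n : nat).
Variables (M : 'I_n -> 'I_n -> trop R) (q : 'I_n -> trop R).

Lemma le_colmin_iff (z : 'I_n -> trop R) :
  (forall j, ereal_of_trop (z j) <= colmin M q j)%E <->
  (forall i j, ereal_of_trop (tmul (M i j) (z j)) <= ereal_of_trop (q i))%E.
Proof.
split=> [z_le i j | Mz_le j].
  by rewrite tmul_le_tdiff (le_trans (z_le j)) ?bigmin_le.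
by apply: le_bigmin => [|k _]; rewrite ?leey -?tmul_le_tdiff.
Qed.

Lemma solution_row_iff (w z : 'I_n -> trop R) (i : 'I_n) :
  tmax (w i) (tmatvec M z i) = q i <->
  [/\ (ereal_of_trop (w i) <= ereal_of_trop (q i))%E,
      (forall j, ereal_of_trop (tmul (M i j) (z j)) <= ereal_of_trop (q i))%E &
      w i = q i \/ exists j, tmul (M i j) (z j) = q i].
Proof.
have Mz_bigmax := ereal_of_trop_bigmax _ _ (index_enum 'I_n) xpredT
  (fun j => tmul (M i j) (z j)).
rewrite -/(tmatvec M z i) in Mz_bigmax.
split=> [wMz_q | [w_le Mz_le cover]].
  have {}wMz_q := congr1 ereal_of_trop wMz_q.
  rewrite ereal_of_trop_max Mz_bigmax in wMz_q.
  split=> [| j |]; first by rewrite -wMz_q le_max lexx.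
    by rewrite -wMz_q le_max le_bigmax orbT.
  have [j0 _ Mz_j0] := eq_bigmax i xpredT
    (fun j => ereal_of_trop (tmul (M i j) (z j))) erefl (fun _ _ => leNye _).
  have [w_le_Mz|Mz_lt_w] := leP (ereal_of_trop (w i))
    (\big[Order.max/-oo%E]_(j < n) ereal_of_trop (tmul (M i j) (z j))).
    right; exists j0; apply: ereal_of_trop_inj.
    by rewrite -wMz_q max_r // Mz_j0.
  by left; apply: ereal_of_trop_inj; rewrite -wMz_q max_l // ltW.
apply: ereal_of_trop_inj; apply: le_anti.
rewrite ereal_of_trop_max Mz_bigmax ge_max w_le bigmax_le ?leNye //=.
case: cover => [->|[j <-]]; first by rewrite le_max lexx.
by rewrite le_max le_bigmax orbT.
Qed.

Lemma perfect_matching_row_ex {F : {set edge n}} (i : 'I_n) :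
  perfect_matching M q F -> exists2 e, e \in F & row_of e = i.
Proof.
case=> _ [/(_ i) row1 _].
have /card_gt0P[e] : (0 < #|[set e in F | row_of e == i]|)%N by rewrite row1.
by rewrite inE => /andP[F_e /eqP]; exists e.
Qed.

Lemma perfect_matching_col_inj {F : {set edge n}} :
  perfect_matching M q F -> {in F &, injective (@col_of n)}.
Proof.
case=> _ [_ col1] e1 e2 F_e1 F_e2 col_e12.
have /card_le1_eqP col_eq : (#|[set e in F | col_of e == col_of e1]| <= 1)%N.
  by rewrite col1.
by apply: col_eq; rewrite inE ?F_e1 ?F_e2 ?col_e12 eqxx.
Qed.

Lemma perfect_matching_imset (g : 'I_n -> edge n) :
  (forall i, is_edge M q (g i)) -> (forall i, row_of (g i) = i) ->
  injective (fun i => col_of (g i)) ->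
  perfect_matching M q [set g i | i : 'I_n].
Proof.
move=> g_edge g_row g_col.
have mem_g e : (e \in [set g i | i : 'I_n]) = (g (row_of e) == e).
  apply/imsetP/eqP => [[i _ ->]|ge]; first by rewrite g_row.
  by exists (row_of e); rewrite ?ge.
split; [by move=> e /imsetP[i _ ->] | split=> [i|j]].
  apply/eqP/cards1P; exists (g i); apply/setP => e; rewrite !inE mem_g.
  apply/andP/eqP => [[/eqP ge /eqP re] | ->]; first by rewrite -ge re.
  by rewrite g_row !eqxx.
apply/eqP/cards1P; exists (g (invF g_col j)); apply/setP => e.
rewrite !inE mem_g; apply/andP/eqP => [[/eqP ge /eqP ce] | ->].
  by rewrite -ge; congr g; apply/g_col; rewrite /= ge ce (f_invF g_col).
by rewrite g_row (f_invF g_col) !eqxx.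
Qed.

Lemma alpha_z_red {F : {set edge n}} {i j : 'I_n} :
  perfect_matching M q F -> inr (i, j) \in F ->
  alpha_z M q F j = tsub (q i) (M i j).
Proof.
move=> /perfect_matching_col_inj F_inj F_ij; rewrite /alpha_z.
case: pickP => [k F_kj|/(_ i)]; last by rewrite F_ij.
by case: (F_inj _ _ F_kj F_ij erefl) => ->.
Qed.

Lemma alpha_z_blue {F : {set edge n}} {j : 'I_n} :
  perfect_matching M q F -> inl j \in F -> alpha_z M q F j = None.
Proof.
move=> /perfect_matching_col_inj F_inj F_j; rewrite /alpha_z.
by case: pickP => // k F_kj; have := F_inj _ _ F_kj F_j erefl.
Qed.

Section FiniteData.
Hypothesis col_fin : forall j, exists i, M i j <> None.
Hypothesis q_fin : forall i, q i <> None.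

Lemma colmin_lt_ey (j : 'I_n) : (colmin M q j < +oo)%E.
Proof.
have [i] := col_fin j; case Mij: (M i j) => [b|] // _; rewrite /colmin.
apply: le_lt_trans (bigmin_le _ i _) _.
by case: (q i) (q_fin i) => [a|] //= _; rewrite Mij ltey.
Qed.

Lemma edge_entry_fin {i j : 'I_n} : is_edge M q (inr (i, j)) -> M i j <> None.
Proof.
move=> /eqP + Mij; rewrite Mij /= => y_colmin.
by have := colmin_lt_ey j; rewrite -y_colmin ltxx.
Qed.

Lemma alpha_z_le_colmin {F : {set edge n}} (j : 'I_n) :
  perfect_matching M q F -> (ereal_of_trop (alpha_z M q F j) <= colmin M q j)%E.
Proof.
case=> F_edge _; rewrite /alpha_z.
case: pickP => [k F_kj|_]; last exact: leNye.
have kj_edge := F_edge _ F_kj.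
have := edge_entry_fin kj_edge; move/eqP: kj_edge.
by case: (q k) (q_fin k) => [a|] // _; case: (M k j) => [b|] //= ->.
Qed.

Lemma alpha_is_solution (F : {set edge n}) :
  perfect_matching M q F -> (exists e, e \in F /\ is_red e) ->
  is_solution M q (alpha_w q F) (alpha_z M q F).
Proof.
move=> F_pm [e0 [F_e0 red_e0]]; have [F_edge _] := F_pm.
have Mz_le := (le_colmin_iff _).1 (fun j => alpha_z_le_colmin j F_pm).
split; [move=> i|split].
- apply/solution_row_iff; split=> //.
    by rewrite /alpha_w; case: ifP => _; rewrite ?lexx ?leNye.
  have [[k|[k j]] F_e /= <-] := perfect_matching_row_ex i F_pm.
    by left; rewrite /alpha_w F_e.
  right; exists j; rewrite (alpha_z_red F_pm F_e).
  have := edge_entry_fin (F_edge _ F_e).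
  case: (q k) (q_fin k) => [a|] // _; case: (M k j) => [b|] // _.
  by apply/tmul_eq_SomeP; exists b.
- apply/bigtmax_eq_None => i; rewrite /alpha_w; case: ifP => [F_i|_] //.
  by rewrite alpha_z_blue //; case: (q i).
- case: e0 F_e0 red_e0 => [//|[i j]] F_ij _; exists j.
  rewrite (alpha_z_red F_pm F_ij); have := edge_entry_fin (F_edge _ F_ij).
  by case: (q i) (q_fin i) => [a|] // _; case: (M i j).
Qed.

Section SolutionToMatching.
Hypothesis nondeg : tnecp_nondegenerate M q.
Variables w z : 'I_n -> trop R.
Hypothesis sol : is_solution M q w z.

Definition tight (i j : 'I_n) : bool := tmul (M i j) (z j) == q i.

Lemma tightP {i j} : tight i j ->
  exists a b, [/\ q i = Some a, M i j = Some b & z j = Some (a - b)].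
Proof.
rewrite /tight; case: (q i) (q_fin i) => [a|] // _.
by move=> /eqP/tmul_eq_SomeP[b Mb zab]; exists a, b.
Qed.

Lemma tight_z {i j} : tight i j -> z j = tsub (q i) (M i j).
Proof. by move=> /tightP[a [b [-> -> ->]]]. Qed.

Lemma z_le_colmin (j : 'I_n) : (ereal_of_trop (z j) <= colmin M q j)%E.
Proof.
apply: (le_colmin_iff z).2 => i.
by have [_ Mz_le _] := (solution_row_iff w z i).1 (sol.1 i).
Qed.

Lemma tight_edge {i j} : tight i j -> is_edge M q (inr (i, j)).
Proof.
move=> /tightP[a [b [qa Mb zab]]]; rewrite /= eq_le (bigmin_le _ i) andbT.
by have := z_le_colmin j; rewrite zab qa Mb.
Qed.

Lemma tight_inj {i i' j} : tight i j -> tight i' j -> i = i'.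
Proof.
move=> /tight_edge ij /tight_edge i'j.
have /card_le1_eqP edge_eq :
    (#|[set k | tdiff (q k) (M k j) == colmin M q j]| <= 1)%N.
  by rewrite nondeg.
by apply: edge_eq; rewrite inE; [exact: i'j | exact: ij].
Qed.

Lemma solution_compl (k : 'I_n) : w k = None \/ z k = None.
Proof.
have [_ [/bigtmax_eq_None wz_None _]] := sol.
by move: (wz_None k); case: (w k) => [?|]; case: (z k) => [?|]; auto.
Qed.

Lemma blue_z_None {k} : w k = q k -> z k = None.
Proof. by case: (solution_compl k) => // -> /esym/q_fin. Qed.

Lemma tight_w_None {i j} : tight i j -> w j = None.
Proof.
by move=> /tightP[a [b [_ _ zj]]]; case: (solution_compl j) => //; rewrite zj.
Qed.

Lemma solution_row_cover (i : 'I_n) : w i = q i \/ exists j, tight i j.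
Proof.
have [_ _ [->|[j /eqP]]] := (solution_row_iff w z i).1 (sol.1 i); first by left.
by right; exists j.
Qed.

(* The final [inl i] is never reached, by [solution_row_cover]. *)
Definition solution_edge (i : 'I_n) : edge n :=
  if w i == q i then inl i
  else if [pick j | tight i j] is Some j then inr (i, j) else inl i.

Lemma solution_edgeP (i : 'I_n) :
  (solution_edge i = inl i /\ w i = q i) \/
  exists2 j, solution_edge i = inr (i, j) & tight i j.
Proof.
rewrite /solution_edge; case: eqP => [|w_neq]; first by left.
case: pickP => [j|no_tight]; first by right; exists j.
by case: (solution_row_cover i) => [//|[j]]; rewrite no_tight.
Qed.

Lemma solution_edge_row (i : 'I_n) : row_of (solution_edge i) = i.
Proof. by case: (solution_edgeP i) => [[->]|[j ->]]. Qed.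

Lemma solution_edge_is_edge (i : 'I_n) : is_edge M q (solution_edge i).
Proof. by case: (solution_edgeP i) => [[->]|[j -> /tight_edge]]. Qed.

Lemma solution_edge_col_inj : injective (fun i => col_of (solution_edge i)).
Proof.
move=> i i' /=.
case: (solution_edgeP i) => [[-> wi]|[j -> ij]];
  case: (solution_edgeP i') => [[-> wi']|[j' -> i'j']] //= col_eq.
- by move: (tight_w_None i'j'); rewrite -col_eq wi => /q_fin.
- by move: (tight_w_None ij); rewrite col_eq wi' => /q_fin.
- by move: i'j'; rewrite -col_eq; exact: tight_inj.
Qed.

Lemma solution_edge_col_cover (k : 'I_n) :
  (solution_edge k = inl k /\ w k = q k) \/
  exists2 i, solution_edge i = inr (i, k) & tight i k.
Proof.
(* An injection of 'I_n into itself is onto: this is the counting step. *)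
have /= := f_invF solution_edge_col_inj k; move: (invF _ k) => i.
case: (solution_edgeP i) => [[ei wi]|[j ei ij]]; rewrite ei /= => <-.
  by left.
by right; exists i.
Qed.

Lemma solution_is_alpha : exists F : {set edge n},
  [/\ perfect_matching M q F, (exists e, e \in F /\ is_red e),
      (forall i, w i = alpha_w q F i) & (forall j, z j = alpha_z M q F j)].
Proof.
pose F := [set solution_edge i | i : 'I_n].
have F_pm : perfect_matching M q F := perfect_matching_imset
  solution_edge solution_edge_is_edge solution_edge_row solution_edge_col_inj.
have mem_F i : solution_edge i \in F by apply/imsetP; exists i.
exists F; split=> // [|i|j].
- have [_ [_ [j0 zj0]]] := sol.
  case: (solution_edge_col_cover j0) =>
    [[_ /blue_z_None /zj0 []]|[i ei _]].
  by exists (inr (i, j0)); split; rewrite // -ei mem_F.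
- rewrite /alpha_w; case: (solution_edgeP i) => [[ei wi]|[j ei _]].
    by rewrite -ei mem_F wi.
  have /negPf-> : inl i \notin F.
    apply/imsetP => -[i' _ eq_i']; have := congr1 (@row_of n) eq_i'.
    by rewrite solution_edge_row /= => ii'; subst i'; rewrite ei in eq_i'.
  case: (solution_edge_col_cover i) => [[ei' _]|[k _ /tight_w_None //]].
  by rewrite ei in ei'.
- case: (solution_edge_col_cover j) =>
    [[ej /blue_z_None ->]|[i ei /tight_z ->]].
    by rewrite alpha_z_blue // -ej mem_F.
  have F_ij : inr (i, j) \in F by rewrite -ei mem_F.
  by rewrite (alpha_z_red F_pm F_ij).
Qed.

End SolutionToMatching.

End FiniteData.

End TnecpInstance.

Theorem lemma3p2 (R : realFieldType) (n : nat)
  (M : 'I_n -> 'I_n -> trop R) (q : 'I_n -> trop R) :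
  (forall j : 'I_n, exists i : 'I_n, M i j <> None) ->
  (forall i : 'I_n, q i <> None) ->
  (forall F : {set edge n},
     perfect_matching M q F ->
     (exists e, e \in F /\ is_red e) ->
     is_solution M q (alpha_w q F) (alpha_z M q F)) /\
  (tnecp_nondegenerate M q ->
   forall w z : 'I_n -> trop R, is_solution M q w z ->
   exists F : {set edge n},
     [/\ perfect_matching M q F,
         (exists e, e \in F /\ is_red e),
         (forall i, w i = alpha_w q F i) &
         (forall j, z j = alpha_z M q F j)]).
Proof.
move=> col_fin q_fin; split=> [F|nondeg w z sol].
  exact: alpha_is_solution.
exact: solution_is_alpha.
Qed.
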